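(* Let $n,d,c,\sigma\ge1$ be integers, $p$ a prime, and $x,y\in\{0,\ldots,c\}^n$ each having at most $\sigma$ nonzero coordinates. Let $\rho:\{1,\ldots,n\}\to\{1,\ldots,d\}$ be a uniformly random mapping and $r_1,\ldots,r_n$ independent uniform elements of $\{0,\ldots,p-1\}$, define $\phi_j(z)=\big(\sum_{i:\rho(i)=j}z_ir_i\big)\bmod p$, let $f=|\{j:\phi_j(x)\neq\phi_j(y)\}|$ and $f^*=\mathbb{E}[f]$. Then for every $\alpha>0$, $$\Pr\big[|f-f^*|\ge\alpha\big]\le 2\exp\Big(-\frac{\alpha^2}{4\sigma}\Big).$$
   Context: FSketch construction as described in the claim; the sketches of $x$ and $y$ use the same $\rho$ and $r_1,\ldots,r_n$. *)

From HB Require Import structures.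
From mathcomp Require Import all_boot all_order all_algebra.
From mathcomp Require Import reals.
From mathcomp Require Import sequences.
From mathcomp.analysis Require Import exp.
Set Implicit Arguments. Unset Strict Implicit. Unset Printing Implicit Defensive.
Import Order.TTheory GRing.Theory Num.Theory.
Local Open Scope ring_scope.

(* Sample space of the FSketch randomness: a mapping rho : [n] -> [d]
   (coordinates and buckets are 0-indexed) and values r_1..r_n in {0..p-1}. *)
Definition fs_space (n d p : nat) : finType :=
  ({ffun 'I_n -> 'I_d} * {ffun 'I_n -> 'I_p})%type.

Definition fs_phi (n d p : nat) (rho : {ffun 'I_n -> 'I_d})
  (r : {ffun 'I_n -> 'I_p}) (z : 'I_n -> nat) (j : 'I_d) : nat :=
  ((\sum_(i < n | rho i == j) z i * r i) %% p)%N.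

Definition fs_f (n d p : nat) (x y : 'I_n -> nat) (w : fs_space n d p) : nat :=
  #|[set j : 'I_d | fs_phi w.1 w.2 x j != fs_phi w.1 w.2 y j]|.

Definition unif_prob (R : realType) (T : finType) (E : pred T) : R :=
  #|[set w : T | E w]|%:R / #|T|%:R.

Definition unif_expect (R : realType) (T : finType) (X : T -> R) : R :=
  (\sum_(w : T) X w) / #|T|%:R.

Definition support_size (n : nat) (z : 'I_n -> nat) : nat :=
  #|[set i : 'I_n | z i != 0%N]|.

From HB Require Import structures.
From mathcomp Require Import all_boot all_order all_algebra.
From mathcomp Require Import boolp functions reals interval_inference.
From mathcomp Require Import topology normedtype sequences derive realfun convex.
From mathcomp.analysis Require Import exp.
From mathcomp Require Import ring lra.
Import Order.TTheory GRing.Theory Num.Theory.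
Import numFieldNormedType.Exports.
Local Open Scope ring_scope.

(* Only the pairs (rho(i), r_i) with i in the union S of the supports of x and y
   influence f, and |S| <= 2 sigma.  Redrawing one such pair changes phi_j only
   for the old and the new bucket of i, so f moves by at most 2.  McDiarmid's
   argument (average out one coordinate at a time and apply Hoeffding's lemma to
   the conditional expectation) bounds the moment generating function of f - f*
   by exp(lambda^2 * 4|S| / 8) <= exp(lambda^2 sigma), and the two-sided Chernoff
   bound with lambda = alpha / (2 sigma) gives the tail estimate. *)

Section Calculus.
Context {R : realType}.

Lemma is_derive_MVT {f df : R -> R} {a b : R} :
  a <= b -> (forall x, is_derive x (1:R) f (df x)) ->
  exists2 c, a <= c <= b & f b - f a = df c * (b - a).
Proof.
move=> ab fd; have [|c cab ->] := MVT_segment ab (fun x _ => fd x).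
  apply/continuous_subspaceT => x.
  by have [/derivable1_diffP /differentiable_continuous] := fd x.
by exists c => //; move: cab; rewrite in_itv.
Qed.

Lemma ger0_derive2_ge0 {f df ddf : R -> R} :
  (forall x, is_derive x (1:R) f (df x)) -> (forall x, is_derive x (1:R) df (ddf x)) ->
  (forall x, 0 <= ddf x) -> f 0 = 0 -> df 0 = 0 -> forall h, 0 <= f h.
Proof.
move=> fd dfd ddf_ge0 f0 df0 h.
have [h0|/ltW h0] := leP 0 h.
- have [c /andP[c0 _]] := is_derive_MVT h0 fd; rewrite f0 !subr0 => ->.
  have [c' _] := is_derive_MVT c0 dfd; rewrite df0 !subr0 => dfc.
  by apply: mulr_ge0 => //; rewrite dfc mulr_ge0.
- have [c /andP[_ c0]] := is_derive_MVT h0 fd; rewrite f0 !sub0r => /eqP.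
  rewrite eqr_oppLR => /eqP ->.
  have [c' _] := is_derive_MVT c0 dfd; rewrite df0 !sub0r => dfc.
  have : df c <= 0 by rewrite -oppr_ge0 dfc mulr_ge0 // oppr_ge0.
  by move: h0; rewrite -mulrN; nra.
Qed.

Lemma bernoulli_mgf_le (t h : R) : 0 <= t <= 1 ->
  1 - t + t * expR h <= expR (t * h + h ^+ 2 / 8).
Proof.
move=> /andP[t0 t1].
pose D x := 1 - t + t * expR x.
have D_gt0 x : 0 < D x by rewrite /D; have := expR_gt0 x; nra.
have D_neq0 x : D x != 0 by rewrite gt_eqF.
have dD x : is_derive x (1:R) D (t * expR x).
  have -> : D = cst (1 - t) + t \*: expR by apply/funext.
  by apply: is_derive_eq; rewrite add0r.
pose phi x := t * x + x ^+ 2 / 8 - ln (D x).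
pose dphi x := t + x / 4 - t * expR x / D x.
pose ddphi x := 1 / 4 - t * (1 - t) * expR x / D x ^+ 2.
have phi_d x : is_derive x (1:R) phi (dphi x).
  have -> : phi = cst t * id + cst 8^-1 * id ^+ 2 - (@ln R \o D).
    by apply/funext => y; rewrite /phi !fctE /=; ring.
  (* found by the instance search of [is_derive_eq] *)
  have lnD := is_derive1_comp (is_derive1_ln (D_gt0 x)) (dD x).
  by apply: is_derive_eq; rewrite /dphi /GRing.scale /cst /= expr1; field.
have dphi_d x : is_derive x (1:R) dphi (ddphi x).
  have -> : dphi = cst t + cst 4^-1 * id - cst t * (expR * (fun y => (D y)^-1)).
    by apply/funext => y; rewrite /dphi !fctE /=; ring.
  have Dx := D_neq0 x.
  by apply: is_derive_eq; rewrite /ddphi /GRing.scale /cst /= /D; field.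
(* q (1 - q) <= 1/4 for q = t e^x / D x *)
have ddphi_ge0 x : 0 <= ddphi x.
  have -> : ddphi x = (1 - t - t * expR x) ^+ 2 / (4 * D x ^+ 2).
    by rewrite /ddphi /D; field; rewrite -/(D x).
  by rewrite divr_ge0 ?sqr_ge0 // mulr_ge0 ?sqr_ge0.
have phi0 : phi 0 = 0.
  by rewrite /phi /D expR0 mulr1 subrK ln1 mulr0 expr0n /= mul0r add0r subr0.
have dphi0 : dphi 0 = 0 by rewrite /dphi /D expR0 mulr1 subrK; field.
have := ger0_derive2_ge0 phi_d dphi_d ddphi_ge0 phi0 dphi0 h.
by rewrite subr_ge0 -ler_expR lnK ?posrE.
Qed.

Lemma convex_expR_affine (s u v : R) : 0 <= s <= 1 ->
  expR ((1 - s) * u + s * v) <= (1 - s) * expR u + s * expR v.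
Proof.
move=> /andP[s0 s1]; rewrite addrC [X in _ <= X]addrC.
exact: convex_expR (Itv01 s0 s1) v u.
Qed.
End Calculus.

Section UniformExpectation.
Context {R : realType} {T : finType}.
Implicit Types (f g X : T -> R) (k : R).
Local Notation E := (@unif_expect R T).

Lemma ler_unif_expect {f g : T -> R} : (forall t, f t <= g t) -> E f <= E g.
Proof.
by move=> fg; rewrite ler_wpM2r ?invr_ge0 ?ler0n //; apply: ler_sum => t _.
Qed.

Lemma unif_expectD f g : E (fun t => f t + g t) = E f + E g.
Proof. by rewrite /unif_expect big_split mulrDl. Qed.

Lemma unif_expectZl k f : E (fun t => k * f t) = k * E f.
Proof. by rewrite /unif_expect -mulr_sumr mulrA. Qed.

Lemma unif_expectB f g : E (fun t => f t - g t) = E f - E g.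
Proof.
rewrite unif_expectD -mulN1r -unif_expectZl.
by congr (_ + unif_expect _); apply/funext => t; rewrite mulN1r.
Qed.

Lemma unif_expect_cst k : (0 < #|T|)%N -> E (fun=> k) = k.
Proof.
move=> T0; rewrite /unif_expect sumr_const -[k *+ _]mulr_natr mulfK //.
by rewrite pnatr_eq0 -lt0n.
Qed.

Lemma unif_expect_bounded {X : T -> R} {a b : R} :
  (0 < #|T|)%N -> (forall t, a <= X t <= b) -> a <= E X <= b.
Proof.
move=> T0 Xab; rewrite -[a](unif_expect_cst a T0) -[b](unif_expect_cst b T0).
by apply/andP; split; apply: ler_unif_expect => t; case/andP: (Xab t).
Qed.

Lemma unif_probE (P : pred T) : unif_prob R P = E (fun t => (P t)%:R).
Proof.
rewrite /unif_prob /unif_expect -sum1_card natr_sum big_mkcond /=.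
by congr (_ / _); apply: eq_bigr => t _; rewrite inE; case: (P t).
Qed.

Lemma hoeffding_lemma X a c lam :
  (0 < #|T|)%N -> (forall t, a <= X t <= a + c) ->
  E (fun t => expR (lam * (X t - E X))) <= expR (lam ^+ 2 * c ^+ 2 / 8).
Proof.
move=> T0 Xac; have /andP[a_le mu_le] := unif_expect_bounded T0 Xac.
have [c0|c_neq0] := eqVneq c 0.
  subst c.
  have Xa t : X t = a by have := Xac t; rewrite addr0; lra.
  have -> : E X = a by rewrite (funext Xa) unif_expect_cst.
  rewrite (_ : (fun t => _) = fun=> 1) ?unif_expect_cst //; last first.
    by apply/funext => t; rewrite Xa subrr mulr0 expR0.
  by rewrite expr0n /= mulr0 mul0r expR0.
have c_gt0 : 0 < c by rewrite lt_def c_neq0 -(lerD2l a) addr0 (le_trans a_le mu_le).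
set mu := E X; set th := (mu - a) / c.
have th01 : 0 <= th <= 1.
  by rewrite divr_ge0 ?ler_pdivrMr ?subr_ge0 ?(ltW c_gt0) //= mul1r lerBlDl.
set u := - (th * (lam * c)); set v := u + lam * c.
have pw t : expR (lam * (X t - mu)) <= expR u + (expR v - expR u) / c * (X t - a).
  have [aX Xc] := andP (Xac t); pose s := (X t - a) / c.
  have s01 : 0 <= s <= 1.
    by rewrite divr_ge0 ?ler_pdivrMr ?subr_ge0 ?(ltW c_gt0) //= mul1r lerBlDl.
  have -> : lam * (X t - mu) = (1 - s) * u + s * v.
    by rewrite /v /u /th /s; field; rewrite gt_eqF.
  have -> : expR u + (expR v - expR u) / c * (X t - a) = (1 - s) * expR u + s * expR v.
    by rewrite /s; field; rewrite gt_eqF.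
  exact: convex_expR_affine.
apply: le_trans (ler_unif_expect pw) _.
rewrite unif_expectD unif_expectZl (unif_expectB X (fun=> a)) !unif_expect_cst // -/mu.
have -> : expR u + (expR v - expR u) / c * (mu - a) = expR u * (1 - th + th * expR (lam * c)).
  by rewrite /v expRD /th; field; rewrite gt_eqF.
apply: le_trans (ler_wpM2l (expR_ge0 _) (bernoulli_mgf_le th (lam * c) th01)) _.
by rewrite -expRD /u [X in expR X](_ : _ = lam ^+ 2 * c ^+ 2 / 8) //; ring.
Qed.

Lemma hoeffding_lemma_osc (t0 : T) {X : T -> R} {c : R} lam :
  (forall s t, X s - X t <= c) ->
  E (fun t => expR (lam * (X t - E X))) <= expR (lam ^+ 2 * c ^+ 2 / 8).
Proof.
move=> Xosc; have [tmin _ Xmin] := @arg_minP _ R T t0 predT X isT.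
apply: (hoeffding_lemma X (X tmin)); first by apply/card_gt0P; exists t0.
by move=> t; rewrite Xmin //= -lerBlDl Xosc.
Qed.

Lemma chernoff_indicator_bound (x alpha beta : R) : 0 <= beta ->
  (nat_of_bool (alpha <= `|x|))%:R <=
    expR (- (beta * alpha)) * (expR (beta * x) + expR (- beta * x)).
Proof.
move=> beta0; rewrite mulrDr -!expRD.
have e1 := expR_ge0 (- (beta * alpha) + beta * x).
have e2 := expR_ge0 (- (beta * alpha) + - beta * x).
case: (boolP (alpha <= _)) => [|_]; last by rewrite addr_ge0.
rewrite mulr1n.
have [x0|x0] := leP 0 x.
- rewrite ger0_norm // => ax.
  have : 1 <= expR (- (beta * alpha) + beta * x).
    by rewrite -expR0 ler_expR; nra.
  lra.
- rewrite ltr0_norm // => ax.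
  have : 1 <= expR (- (beta * alpha) + - beta * x).
    by rewrite -expR0 ler_expR; nra.
  lra.
Qed.

Lemma subgaussian_tail X v alpha : 0 < v -> 0 <= alpha ->
  (forall lam, E (fun t => expR (lam * (X t - E X))) <= expR (lam ^+ 2 * v)) ->
  unif_prob R (fun t => alpha <= `|X t - E X|) <= 2 * expR (- (alpha ^+ 2 / (4 * v))).
Proof.
move=> v0 alpha0 mgf.
(* beta minimises - beta * alpha + beta ^+ 2 * v *)
pose beta := alpha / (2 * v).
have beta0 : 0 <= beta by rewrite divr_ge0 // mulr_ge0 // ltW.
rewrite unif_probE.
have := ler_unif_expect (fun t => chernoff_indicator_bound (X t - E X) alpha beta beta0).
move/le_trans; apply.
rewrite unif_expectZl unif_expectD.
apply: le_trans (ler_wpM2l (expR_ge0 _) (lerD (mgf beta) (mgf (- beta)))) _.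
rewrite sqrrN mulrDr -expRD (_ : - (beta * alpha) + beta ^+ 2 * v = - (alpha ^+ 2 / (4 * v))).
  lra.
by rewrite /beta; field; rewrite gt_eqF.
Qed.
End UniformExpectation.

Section BoundedDifferences.
(* A finite product space with coordinates in I and factor A, presented by
   reading ([get]) and overwriting ([upd]) a single coordinate. *)
Context {R : realType} {Om A I : finType}.
Variables (get : Om -> I -> A) (upd : Om -> I -> A -> Om).
Hypothesis getU : forall w i a, get (upd w i a) i = a.
Hypothesis getUo : forall w i j a, j != i -> get (upd w i a) j = get w j.
Hypothesis updget : forall w i, upd w i (get w i) = w.
Hypothesis updU : forall w i a b, upd (upd w i a) i b = upd w i b.
Variable w0 : Om.

Local Notation E := (@unif_expect R Om).
Local Notation EA := (@unif_expect R A).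

Definition depends_only_on (S : {set I}) (F : Om -> R) :=
  forall w w', (forall j, j \in S -> get w j = get w' j) -> F w = F w'.

Definition differ_only_at (i : I) (w w' : Om) := forall j, j != i -> get w j = get w' j.

Definition bounded_differences (S : {set I}) (c : I -> R) (F : Om -> R) :=
  forall i w w', i \in S -> differ_only_at i w w' -> F w - F w' <= c i.

Lemma sum_upd i (f : Om -> R) :
  \sum_(a : A) \sum_(w : Om) f (upd w i a) = #|A|%:R * \sum_(w : Om) f w.
Proof.
rewrite exchange_big pair_big /=.
pose h (wa : Om * A) := (upd wa.1 i wa.2, get wa.1 i).
have hK : involutive h by case=> w a; rewrite /h /= updU updget getU.
rewrite (reindex_inj (inv_inj hK)) /=.
rewrite (eq_bigr (fun wa => f wa.1)); last by case=> w a _; rewrite /h /= updU updget.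
rewrite -(pair_big predT predT (fun w (_ : A) => f w)) /= mulr_sumr.
by apply: eq_bigr => w _; rewrite sumr_const mulr_natl.
Qed.

Lemma unif_expect_upd i (f : Om -> R) : E f = EA (fun a => E (fun w => f (upd w i a))).
Proof.
have Om0 : #|Om|%:R != 0 :> R by rewrite pnatr_eq0 -lt0n; apply/card_gt0P; exists w0.
have A0 : #|A|%:R != 0 :> R by rewrite pnatr_eq0 -lt0n; apply/card_gt0P; exists (get w0 i).
by rewrite /unif_expect -mulr_suml sum_upd; field; apply/andP.
Qed.

Lemma depends_only_on_upd S F i a : depends_only_on S F ->
  depends_only_on (S :\ i) (fun w => F (upd w i a)).
Proof.
move=> FS w w' ww'; apply: FS => j jS; have [->|ji] := eqVneq j i; first by rewrite !getU.
by rewrite !getUo // ww' // in_setD1 ji.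
Qed.

Lemma bounded_differences_upd S c F i a : bounded_differences S c F ->
  bounded_differences (S :\ i) c (fun w => F (upd w i a)).
Proof.
move=> Fc j w w' /setD1P[ji jS] ww'; apply: Fc => // l lj.
by have [->|li] := eqVneq l i; [rewrite !getU | rewrite !getUo // ww'].
Qed.

Lemma bounded_differences_unif_expect_upd {S : {set I}} {c : I -> R} {F : Om -> R} i a b :
  bounded_differences S c F -> i \in S ->
  E (fun w => F (upd w i a)) - E (fun w => F (upd w i b)) <= c i.
Proof.
move=> Fc iS; rewrite -unif_expectB -[c i](@unif_expect_cst R Om); last first.
  by apply/card_gt0P; exists w0.
by apply: ler_unif_expect => w; apply: Fc => // j ji; rewrite !getUo.
Qed.

Lemma mcdiarmid_mgf {S : {set I}} {c : I -> R} {F : Om -> R} lam :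
  depends_only_on S F -> bounded_differences S c F ->
  E (fun w => expR (lam * (F w - E F))) <= expR (lam ^+ 2 * (\sum_(i in S) c i ^+ 2) / 8).
Proof.
have [k] := ubnP #|S|; elim: k S F => // k IH S F.
have [->|[i iS]] := set_0Vmem S.
  move=> _ F_cst _; have -> : F = fun=> F w0 by apply/funext => w; apply: F_cst => j; rewrite inE.
  by rewrite !unif_expect_cst ?subrr ?mulr0 ?big_set0 ?mulr0 ?mul0r //; apply/card_gt0P; exists w0.
rewrite ltnS (cardsD1 i) iS => S'k FS Fc.
pose G a := E (fun w => F (upd w i a)).
set s' := \sum_(j in S :\ i) c j ^+ 2; set K := expR (lam ^+ 2 * s' / 8).
have step a : E (fun w => expR (lam * (F (upd w i a) - E F))) <=
    K * expR (lam * (G a - EA G)).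
  have -> : (fun w => expR (lam * (F (upd w i a) - E F))) =
      (fun w => expR (lam * (G a - EA G)) * expR (lam * (F (upd w i a) - G a))).
    by apply/funext => w; rewrite -expRD (unif_expect_upd i F); congr expR; ring.
  rewrite unif_expectZl mulrC ler_wpM2r ?expR_ge0 //.
  by apply: IH; [|exact: depends_only_on_upd|exact: bounded_differences_upd].
rewrite (unif_expect_upd i) -/G.
apply: le_trans (ler_unif_expect step) _; rewrite unif_expectZl.
have G_osc a b : G a - G b <= c i by exact: bounded_differences_unif_expect_upd i a b Fc iS.
apply: le_trans (ler_wpM2l (expR_ge0 _) (hoeffding_lemma_osc (get w0 i) lam G_osc)) _.
rewrite /K -expRD (big_setD1 i iS) /= -/s'.
by rewrite [X in expR X](_ : _ = lam ^+ 2 * (c i ^+ 2 + s') / 8) //; ring.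
Qed.

End BoundedDifferences.

Section FSketch.
Context {n d p : nat}.
Implicit Types (w : fs_space n d p) (z : 'I_n -> nat).

Definition fs_get w i : 'I_d * 'I_p := (w.1 i, w.2 i).

Definition fs_upd w i (a : 'I_d * 'I_p) : fs_space n d p :=
  ([ffun j => if j == i then a.1 else w.1 j], [ffun j => if j == i then a.2 else w.2 j]).

Lemma fs_getU w i a : fs_get (fs_upd w i a) i = a.
Proof. by rewrite /fs_get !ffunE eqxx; case: a. Qed.

Lemma fs_getUo w i j a : j != i -> fs_get (fs_upd w i a) j = fs_get w j.
Proof. by move=> ji; rewrite /fs_get !ffunE (negbTE ji). Qed.

Lemma fs_updget w i : fs_upd w i (fs_get w i) = w.
Proof.
by case: w => rho r; congr pair; apply/ffunP => j; rewrite ffunE; case: eqP => // ->.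
Qed.

Lemma fs_updU w i a b : fs_upd (fs_upd w i a) i b = fs_upd w i b.
Proof. by congr pair; apply/ffunP => j; rewrite !ffunE; case: (j == i). Qed.

Lemma fs_phi_eq_on_support w w' z j :
  (forall i, z i != 0%N -> fs_get w i = fs_get w' i) ->
  fs_phi w.1 w.2 z j = fs_phi w'.1 w'.2 z j.
Proof.
move=> ww'; rewrite /fs_phi (big_mkcond (fun i => w.1 i == j)).
rewrite (big_mkcond (fun i => w'.1 i == j)); congr (_ %% _)%N; apply: eq_bigr => i _.
by have [->|/ww'[-> ->]] := eqVneq (z i) 0%N; rewrite ?mul0n ?if_same.
Qed.

Lemma fs_phi_eq_off_bucket w w' z i j : differ_only_at fs_get i w w' ->
  w.1 i != j -> w'.1 i != j -> fs_phi w.1 w.2 z j = fs_phi w'.1 w'.2 z j.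
Proof.
move=> ww' wj w'j; rewrite /fs_phi (big_mkcond (fun k => w.1 k == j)).
rewrite (big_mkcond (fun k => w'.1 k == j)); congr (_ %% _)%N; apply: eq_bigr => k _.
by have [->|/ww'[-> ->]] := eqVneq k i; rewrite ?(negbTE wj) ?(negbTE w'j).
Qed.

Lemma leq_fs_f_differ_only_at w w' x y i : differ_only_at fs_get i w w' ->
  (fs_f x y w <= fs_f x y w' + 2)%N.
Proof.
move=> ww'; rewrite /fs_f.
set B := [set j | _]; set B' := [set j | _].
have sub : B \subset B' :|: [set w.1 i; w'.1 i].
  apply/subsetP => j; rewrite !inE.
  have [<-|wj] := eqVneq (w.1 i) j; first by rewrite orbT.
  have [<-|w'j] := eqVneq (w'.1 i) j; first by rewrite !orbT.
  by rewrite !(fs_phi_eq_off_bucket w w' _ i j ww' wj w'j) => ->.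
apply: leq_trans (subset_leq_card sub) _; apply: leq_trans (leq_card_setU _ _) _.
by rewrite leq_add2l cards2; case: (_ != _).
Qed.

Lemma fs_f_bounded_differences (R : realType) S x y :
  bounded_differences fs_get S (fun=> 2) (fun w => (fs_f x y w)%:R : R).
Proof.
move=> i w w' _ /(leq_fs_f_differ_only_at w w' x y i).
by rewrite -(ler_nat R) natrD lerBlDr addrC.
Qed.

Lemma fs_f_depends_only_on (R : realType) x y :
  depends_only_on fs_get ([set i | x i != 0%N] :|: [set i | y i != 0%N])
    (fun w => (fs_f x y w)%:R : R).
Proof.
move=> w w' ww'; congr _%:R; apply: eq_card => j; rewrite !inE.
by rewrite !(fs_phi_eq_on_support w w') // => i zi; apply: ww'; rewrite !inE zi ?orbT.
Qed.
End FSketch.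

Theorem lemma3 (R : realType) (n d c sigma p : nat)
  (hn : (1 <= n)%N) (hd : (1 <= d)%N) (hc : (1 <= c)%N) (hsigma : (1 <= sigma)%N)
  (hp : prime p)
  (x y : 'I_n -> nat)
  (hx : forall i, (x i <= c)%N) (hy : forall i, (y i <= c)%N)
  (hxs : (support_size x <= sigma)%N) (hys : (support_size y <= sigma)%N)
  (alpha : R) (halpha : 0 < alpha) :
  let fstar : R :=
    @unif_expect R _ (fun w : fs_space n d p => (fs_f x y w)%:R) in
  @unif_prob R _ (fun w : fs_space n d p => alpha <= `|(fs_f x y w)%:R - fstar|)
  <= 2 * expR (- (alpha ^+ 2 / (4 * sigma%:R))).
Proof.
cbv zeta; pose w0 : fs_space n d p := ([ffun=> Ordinal hd], [ffun=> Ordinal (prime_gt0 hp)]).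
set S := [set i | x i != 0%N] :|: [set i | y i != 0%N].
have cardS : #|S|%:R <= 2 * sigma%:R :> R.
  rewrite -natrM ler_nat; apply: leq_trans (leq_card_setU _ _) _.
  by rewrite mul2n -addnn leq_add.
apply: subgaussian_tail; [by rewrite ltr0n | exact: ltW | move=> lam].
apply: le_trans (mcdiarmid_mgf fs_get fs_upd fs_getU fs_getUo fs_updget fs_updU w0 lam
  (fs_f_depends_only_on R x y) (fs_f_bounded_differences R S x y)) _.
rewrite ler_expR -mulrA ler_wpM2l ?sqr_ge0 // sumr_const ler_pdivrMr ?ltr0n //.
by rewrite -mulr_natr expr2; lra.
Qed.
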